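(* For any irrational number $\alpha \in \mathbb{R}\setminus\mathbb{Q}$, there are infinitely many fractions $\frac{P}{4Q}$, with $P$ an odd integer and $Q$ a positive integer, $P$ and $Q$ relatively prime, such that $$\left| \alpha - \frac{P}{4Q} \right| < \frac{1}{4Q^2}.$$ *)

From Stdlib Require Import Reals ZArith List Znumtheory.
Open Scope R_scope.

Definition irrational (x : R) : Prop :=
  ~ exists (p q : Z), q <> 0%Z /\ x = IZR p / IZR q.

Definition good_fraction (alpha r : R) : Prop :=
  exists (P Q : Z), Z.odd P = true /\ (Q > 0)%Z /\ rel_prime P Q /\
    r = IZR P / (4 * IZR Q) /\
    Rabs (alpha - IZR P / (4 * IZR Q)) < 1 / (4 * IZR Q ^ 2).

From Stdlib Require Import Reals ZArith List Znumtheory Lra Lia Psatz.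
Open Scope R_scope.

(* Apply the classical Farey-bracket construction to [4 alpha]: refining a
   bracket [a/b < 4 alpha < c/d] with [bc - ad = 1] alternately on the two
   sides yields two Farey-neighbours [p/q], [p'/q'] with arbitrarily large
   denominators, each satisfying [|q (4 alpha) - p| < 1/q].  Neighbours have
   [q p' - p q' = 1], so one of [p], [p'] is odd, and dividing by [4q] gives
   [|alpha - p/(4q)| < 1/(4q^2)]. *)

Lemma irrational_mul_neq (x : R) (p q : Z) :
  irrational x -> q <> 0%Z -> IZR q * x <> IZR p.
Proof.
  intros Hx Hq E. apply Hx. exists p, q. split; [exact Hq|].
  rewrite <- E. field. now apply not_0_IZR.
Qed.

Lemma irrational_opp (x : R) : irrational x -> irrational (- x).
Proof.
  intros Hx [p [q [Hq E]]]. apply Hx. exists (- p)%Z, q. split; [exact Hq|].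
  rewrite opp_IZR. apply not_0_IZR in Hq.
  replace x with (- - x) by ring. rewrite E. field. exact Hq.
Qed.

Lemma irrational_mul4 (x : R) : irrational x -> irrational (4 * x).
Proof.
  intros Hx [p [q [Hq E]]]. apply Hx. exists p, (4 * q)%Z. split; [lia|].
  rewrite mult_IZR. apply not_0_IZR in Hq.
  replace x with (4 * x / 4) by field. rewrite E. simpl. field. exact Hq.
Qed.

Lemma exists_floor_multiple (u v : R) : 0 < u -> 0 < v ->
  exists k : Z, (0 <= k)%Z /\ IZR k * u <= v /\ v < (IZR k + 1) * u.
Proof.
  intros Hu Hv.
  destruct (archimed (v / u)) as [Hup1 Hup2].
  assert (0 < v / u) by (apply Rdiv_lt_0_compat; lra).
  assert (0 < up (v / u))%Z by (apply lt_IZR; lra).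
  exists (up (v / u) - 1)%Z. rewrite minus_IZR. split; [lia|].
  assert (v = v / u * u) by (field; lra).
  split; nra.
Qed.

Definition farey_bracket (x : R) (a b c d : Z) : Prop :=
  (1 <= b)%Z /\ (1 <= d)%Z /\ IZR a < IZR b * x /\ IZR d * x < IZR c /\
  (b * c - a * d = 1)%Z.

Lemma farey_bracket_opp x a b c d :
  farey_bracket x a b c d -> farey_bracket (- x) (- c) d (- a) b.
Proof.
  intros [Hb [Hd [Ha [Hc Hdet]]]].
  repeat split; try lia; rewrite opp_IZR; lra.
Qed.

Lemma farey_bracket_opp_inv x a b c d :
  farey_bracket (- x) a b c d -> farey_bracket x (- c) d (- a) b.
Proof.
  intro H. rewrite <- (Ropp_involutive x). exact (farey_bracket_opp _ _ _ _ _ H).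
Qed.

Lemma farey_bracket_right_err x a b c d :
  farey_bracket x a b c d -> IZR c - IZR d * x < 1 / IZR b.
Proof.
  intros [Hb [Hd [Ha [Hc Hdet]]]].
  apply IZR_le in Hb. apply IZR_le in Hd.
  assert (Hdet' : IZR b * IZR c - IZR a * IZR d = 1).
  { rewrite <- !mult_IZR, <- minus_IZR, Hdet. reflexivity. }
  assert (IZR b * (IZR c - IZR d * x) < 1) by nra.
  apply (Rmult_lt_reg_l (IZR b)); [lra|].
  replace (IZR b * (1 / IZR b)) with 1 by (field; lra). exact H.
Qed.

Lemma farey_bracket_right_approx x a b c d :
  farey_bracket x a b c d -> (d <= b)%Z ->
  Rabs (IZR d * x - IZR c) < 1 / IZR d.
Proof.
  intros H Hdb. pose proof (farey_bracket_right_err _ _ _ _ _ H) as Herr.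
  destruct H as [Hb [Hd [_ [Hc _]]]].
  assert (1 / IZR b <= 1 / IZR d).
  { unfold Rdiv. rewrite !Rmult_1_l.
    apply Rinv_le_contravar; [apply IZR_lt; lia | apply IZR_le; lia]. }
  rewrite Rabs_left1; lra.
Qed.

Lemma farey_bracket_left_approx x a b c d :
  farey_bracket x a b c d -> (b <= d)%Z ->
  Rabs (IZR b * x - IZR a) < 1 / IZR b.
Proof.
  intros H Hbd.
  pose proof (farey_bracket_right_approx _ _ _ _ _ (farey_bracket_opp _ _ _ _ _ H) Hbd)
    as Happrox.
  rewrite opp_IZR, <- Rabs_Ropp in Happrox.
  replace (- (IZR b * - x - - IZR a)) with (IZR b * x - IZR a) in Happrox by ring.
  exact Happrox.
Qed.

(* Replace [a/b] by the largest mediant [((k+1)a + c)/((k+1)b + d)] below [x];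
   the right end becomes [(ka + c)/(kb + d)], still a neighbour of [a/b]. *)
Lemma farey_bracket_refine_left x a b c d :
  irrational x -> farey_bracket x a b c d ->
  exists a' b' c' d', farey_bracket x a' b' c' d' /\
    (d' <= b')%Z /\ (b + d <= b')%Z /\ (d <= d')%Z /\ (b * c' - a * d' = 1)%Z.
Proof.
  intros Hx H. pose proof H as [Hb [Hd [Ha [Hc Hdet]]]].
  destruct (exists_floor_multiple (IZR b * x - IZR a) (IZR c - IZR d * x))
    as [k [Hk [Hk1 Hk2]]]; try lra.
  assert (Hneq : IZR k * (IZR b * x - IZR a) <> IZR c - IZR d * x).
  { intro E. apply (irrational_mul_neq x (c + k * a) (d + k * b)); [exact Hx|nia|].
    rewrite plus_IZR, plus_IZR, !mult_IZR. nra. }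
  assert (Hlt : IZR k * (IZR b * x - IZR a) < IZR c - IZR d * x)
    by (destruct Hk1; [assumption | contradiction]).
  exists ((k + 1) * a + c)%Z, ((k + 1) * b + d)%Z, (k * a + c)%Z, (k * b + d)%Z.
  repeat split; try nia; rewrite ?plus_IZR, ?mult_IZR, ?plus_IZR; nra.
Qed.

Lemma farey_bracket_refine_right x a b c d :
  irrational x -> farey_bracket x a b c d ->
  exists a' b' c' d', farey_bracket x a' b' c' d' /\
    (b' <= d')%Z /\ (b + d <= d')%Z /\ (b <= b')%Z /\ (b' * c - a' * d = 1)%Z.
Proof.
  intros Hx H.
  destruct (farey_bracket_refine_left (- x) _ _ _ _
              (irrational_opp x Hx) (farey_bracket_opp _ _ _ _ _ H))
    as [a' [b' [c' [d' [H' [Hle [Hsum [Hmono Hdet]]]]]]]].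
  exists (- c')%Z, d', (- a')%Z, b'.
  split; [exact (farey_bracket_opp_inv _ _ _ _ _ H') | lia].
Qed.

Lemma farey_bracket_large x (n : nat) : irrational x ->
  exists a b c d, farey_bracket x a b c d /\
    (Z.of_nat n <= b)%Z /\ (Z.of_nat n <= d)%Z.
Proof.
  intro Hx. induction n as [|n IH].
  - destruct (archimed x) as [Hup1 Hup2].
    assert (IZR (up x - 1) <> x).
    { intro E. apply (irrational_mul_neq x (up x - 1) 1); [exact Hx|lia|].
      rewrite E. ring. }
    exists (up x - 1)%Z, 1%Z, (up x), 1%Z.
    repeat split; try lia; rewrite ?minus_IZR in *; lra.
  - destruct IH as [a [b [c [d [H [Hb Hd]]]]]].
    destruct (farey_bracket_refine_left x _ _ _ _ Hx H)
      as [a' [b' [c' [d' [H' [_ [Hb' [Hd' _]]]]]]]].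
    destruct (farey_bracket_refine_right x _ _ _ _ Hx H')
      as [a'' [b'' [c'' [d'' [H'' [_ [Hd'' [Hb'' _]]]]]]]].
    exists a'', b'', c'', d''. split; [exact H''|].
    destruct H as [? [? _]]. destruct H' as [? [? _]]. lia.
Qed.

Lemma odd_of_det_one (p q p' q' : Z) :
  (q * p' - p * q' = 1)%Z -> Z.odd p' = false -> Z.odd p = true.
Proof.
  intros Hdet Hp'. destruct (Z.odd p) eqn:Hp; [reflexivity|].
  apply (f_equal Z.odd) in Hdet.
  rewrite Z.odd_sub, !Z.odd_mul, Hp, Hp', !Bool.andb_false_r in Hdet.
  discriminate.
Qed.

Lemma odd_rational_approx x (n : nat) : irrational x ->
  exists P Q, Z.odd P = true /\ (Z.of_nat n <= Q)%Z /\ (1 <= Q)%Z /\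
    rel_prime P Q /\ Rabs (IZR Q * x - IZR P) < 1 / IZR Q.
Proof.
  intro Hx.
  destruct (farey_bracket_large x n Hx) as [a [b [c [d [H [Hb Hd]]]]]].
  destruct (farey_bracket_refine_left x _ _ _ _ Hx H)
    as [a' [b' [c' [d' [H' [Hdb' [Hb' [Hd' _]]]]]]]].
  destruct (farey_bracket_refine_right x _ _ _ _ Hx H')
    as [a'' [b'' [c'' [d'' [H'' [Hbd'' [_ [Hb'' Hdet]]]]]]]].
  pose proof H' as [_ [Hd1 [_ [_ Hdet']]]].
  pose proof H'' as [Hb1 [_ [_ [_ Hdet'']]]].
  destruct (Z.odd c') eqn:Hc'.
  - exists c', d'. split; [exact Hc'|]. do 2 (split; [lia|]). split.
    + apply bezout_rel_prime, (Bezout_intro _ _ _ b' (- a')%Z). lia.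
    + exact (farey_bracket_right_approx _ _ _ _ _ H' Hdb').
  - exists a'', b''. split; [exact (odd_of_det_one _ _ _ _ Hdet Hc')|].
    do 2 (split; [lia|]). split.
    + apply bezout_rel_prime, (Bezout_intro _ _ _ (- d'')%Z c''). lia.
    + exact (farey_bracket_left_approx _ _ _ _ _ H'' Hbd'').
Qed.

Lemma approx_div4 (alpha : R) (P Q : Z) : (1 <= Q)%Z ->
  Rabs (IZR Q * (4 * alpha) - IZR P) < 1 / IZR Q ->
  Rabs (alpha - IZR P / (4 * IZR Q)) < 1 / (4 * IZR Q ^ 2).
Proof.
  intros HQ Happrox. apply IZR_le in HQ.
  replace (alpha - IZR P / (4 * IZR Q))
    with ((IZR Q * (4 * alpha) - IZR P) * / (4 * IZR Q)) by (field; lra).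
  replace (1 / (4 * IZR Q ^ 2)) with (1 / IZR Q * / (4 * IZR Q)) by (field; lra).
  rewrite Rabs_mult, (Rabs_pos_eq (/ (4 * IZR Q)))
    by (left; apply Rinv_0_lt_compat; lra).
  apply Rmult_lt_compat_r; [apply Rinv_0_lt_compat; lra | exact Happrox].
Qed.

Lemma good_fraction_close alpha (eps : R) : irrational alpha -> 0 < eps ->
  exists r, good_fraction alpha r /\ r <> alpha /\ Rabs (alpha - r) < eps.
Proof.
  intros Hirr Heps.
  destruct (archimed (/ eps)) as [Hup _].
  assert (Hinv : 0 < / eps) by (apply Rinv_0_lt_compat; exact Heps).
  destruct (odd_rational_approx (4 * alpha) (Z.to_nat (up (/ eps)))
              (irrational_mul4 alpha Hirr))
    as [P [Q [HP [HQn [HQ [Hrel Happrox]]]]]].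
  pose proof (approx_div4 alpha P Q HQ Happrox) as Hbound.
  assert (HQeps : / eps < IZR Q).
  { assert (0 < up (/ eps))%Z by (apply lt_IZR; lra).
    assert (Hup_le : (up (/ eps) <= Q)%Z) by lia. apply IZR_le in Hup_le. lra. }
  exists (IZR P / (4 * IZR Q)). split; [|split].
  - exists P, Q. repeat (split; [assumption|]). split; [lia|]. split; [exact Hrel|].
    split; [reflexivity | exact Hbound].
  - intro E. apply Hirr. exists P, (4 * Q)%Z. split; [lia|].
    rewrite mult_IZR. symmetry. exact E.
  - apply IZR_le in HQ.
    assert (HepsQ : 1 < eps * IZR Q).
    { apply (Rmult_lt_reg_l (/ eps)); [assumption|].
      rewrite <- Rmult_assoc, Rinv_l, Rmult_1_l, Rmult_1_r by lra. exact HQeps. }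
    assert (Hsmall : 1 / (4 * IZR Q ^ 2) < eps).
    { apply (Rmult_lt_reg_l (4 * IZR Q ^ 2)); [nra|].
      replace (4 * IZR Q ^ 2 * (1 / (4 * IZR Q ^ 2))) with 1 by (field; lra).
      nra. }
    lra.
Qed.

Lemma finite_list_separated (alpha : R) (l : list R) : exists eps, 0 < eps /\
  forall y, In y l -> y <> alpha -> eps <= Rabs (alpha - y).
Proof.
  induction l as [|y l [eps [Heps Hsep]]].
  - exists 1. split; [lra|]. intros y [].
  - destruct (Req_dec y alpha) as [E|E].
    + exists eps. split; [exact Heps|]. intros z [<-|Hz] Hz'; [contradiction|auto].
    + exists (Rmin eps (Rabs (alpha - y))). split.
      * apply Rmin_glb_lt; [exact Heps|]. apply Rabs_pos_lt. lra.
      * intros z [<-|Hz] Hz'; [apply Rmin_r|].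
        eapply Rle_trans; [apply Rmin_l | auto].
Qed.

Theorem corollary1 (alpha : R) (Hirr : irrational alpha) :
  forall l : list R, exists r : R, good_fraction alpha r /\ ~ In r l.
Proof.
  intros l.
  destruct (finite_list_separated alpha l) as [eps [Heps Hsep]].
  destruct (good_fraction_close alpha eps Hirr Heps) as [r [Hgood [Hneq Hclose]]].
  exists r. split; [exact Hgood|].
  intro Hin. specialize (Hsep r Hin Hneq). lra.
Qed.
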